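(* Let $f:\mathbb{R}^p\to\mathbb{R}\cup\{+\infty\}$ be self-concordant, $\psi:\mathbb{R}^n\to\mathbb{R}\cup\{+\infty\}$ proper, closed, convex, and $D\in\mathbb{R}^{n\times p}$ of full row rank ($n\le p$). Let $\varphi(y):=f^\ast(-D^\top y)$, and let $y^k\in\operatorname{dom}\varphi$ with $\nabla^2\varphi(y^k)=D\nabla^2 f^\ast(-D^\top y^k)D^\top\succ0$. Fix $\xi^0\in\partial\psi^\ast(y^0)$ for some $y^0$, $\tau_{k+1}\in(0,1]$, and set $\nabla\varphi_{\tau_{k+1}}(y^k):=\nabla\varphi(y^k)-(\tfrac{1}{\tau_{k+1}}-1)\xi^0$, $$\mathcal{P}_k(y):=\langle\nabla\varphi_{\tau_{k+1}}(y^k),y-y^k\rangle+\tfrac12\langle\nabla^2\varphi(y^k)(y-y^k),y-y^k\rangle+\tfrac{1}{\tau_{k+1}}\psi^\ast(y),$$ with minimizer $\bar y^{k+1}$, and $H:=\nabla^2\varphi(y^k)^{-1}$, $h:=y^k-\nabla^2\varphi(y^k)^{-1}\nabla\varphi_{\tau_{k+1}}(y^k)$. Let $\delta\ge0$ and let $z^{k+1}\in\mathbb{R}^n$ be a $\delta$-approximate solution of $\min_z\{\tfrac12\langle Hz,z\rangle-\langle h,z\rangle+\tfrac{1}{\tau_{k+1}}\psi(\tau_{k+1}z)\}$ in the sense that there exists $\tilde e_k$ with $\|\tilde e_k\|_{y^k}\le\delta$ and $\tilde e_k\in Hz^{k+1}-h+\partial\psi(\tau_{k+1}z^{k+1})$.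 Define $$y^{k+1}:=y^k-\nabla^2\varphi(y^k)^{-1}\big(\nabla\varphi_{\tau_{k+1}}(y^k)+z^{k+1}\big)+\tilde e_k.$$ Then $\mathcal{P}_k(y^{k+1})-\mathcal{P}_k(\bar y^{k+1})\le\frac{\delta^2}{2}$.
   Context: $f^\ast,\psi^\ast$ denote Fenchel conjugates. Local norm of $\varphi$: $\|u\|_y:=\langle\nabla^2\varphi(y)u,u\rangle^{1/2}$. Self-concordance of $f$: $|\langle\nabla^3 f(x)[u]u,u\rangle|\le2\langle\nabla^2 f(x)u,u\rangle^{3/2}$. *)

From HB Require Import structures.
From mathcomp Require Import all_boot all_order all_algebra.
From mathcomp Require Import all_classical all_reals all_analysis.
Set Implicit Arguments. Unset Strict Implicit. Unset Printing Implicit Defensive.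
Import Order.TTheory GRing.Theory Num.Theory numFieldNormedType.Exports.
Local Open Scope ring_scope.
Local Open Scope classical_set_scope.

Definition dotv (R : realType) (n : nat) (u v : 'cV[R]_n) : R :=
  (u^T *m v) ord0 ord0.
Definition vnorm (R : realType) (n : nat) (u : 'cV[R]_n) : R :=
  Num.sqrt (dotv u u).
(* local norm ||u||_y := <Q u, u>^{1/2}, Q = Hessian of phi at y *)
Definition locnorm (R : realType) (n : nat) (Q : 'M[R]_n) (u : 'cV[R]_n) : R :=
  Num.sqrt (dotv (Q *m u) u).

Definition fconj (R : realType) (n : nat) (f : 'cV[R]_n -> \bar R)
  (s : 'cV[R]_n) : \bar R :=
  ereal_sup [set ((dotv s x)%:E - f x)%E | x in [set: 'cV[R]_n]].

Definition proper_fun (R : realType) (n : nat) (f : 'cV[R]_n -> \bar R) : Prop :=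
  (forall x, f x != -oo%E) /\ exists x, f x \is a fin_num.

Definition convex_fun (R : realType) (n : nat) (f : 'cV[R]_n -> \bar R) : Prop :=
  forall (x y : 'cV[R]_n) (t : R), 0 <= t <= 1 ->
    (f (t *: x + (1 - t) *: y)%R <= t%:E * f x + (1 - t)%:E * f y)%E.

(* closed = lower semicontinuous *)
Definition lsc_fun (R : realType) (n : nat) (f : 'cV[R]_n -> \bar R) : Prop :=
  forall x (a : R), (a%:E < f x)%E ->
    exists2 d : R, 0 < d & forall z, vnorm (z - x) < d -> (a%:E < f z)%E.

Definition subdiff (R : realType) (n : nat) (f : 'cV[R]_n -> \bar R)
  (x : 'cV[R]_n) : set 'cV[R]_n :=
  [set g | f x \is a fin_num /\
           forall z, (f x + (dotv g (z - x))%:E <= f z)%E].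

Definition grad_at (R : realType) (n : nat) (f : 'cV[R]_n -> \bar R)
  (y g : 'cV[R]_n) : Prop :=
  (exists2 r : R, 0 < r & forall h, vnorm h < r -> f (y + h) \is a fin_num) /\
  forall eps : R, 0 < eps -> exists2 d : R, 0 < d & forall h, vnorm h < d ->
    `| fine (f (y + h)) - fine (f y) - dotv g h | <= eps * vnorm h.

Definition hess_at (R : realType) (n : nat) (f : 'cV[R]_n -> \bar R)
  (y : 'cV[R]_n) (Q : 'M[R]_n) : Prop :=
  exists2 r : R, 0 < r & exists G : 'cV[R]_n -> 'cV[R]_n,
    (forall h, vnorm h < r -> grad_at f (y + h) (G (y + h))) /\
    forall eps : R, 0 < eps -> exists2 d : R, 0 < d & forall h, vnorm h < d ->
      vnorm (G (y + h) - G y - Q *m h) <= eps * vnorm h.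

Definition posdef (R : realType) (n : nat) (Q : 'M[R]_n) : Prop :=
  Q^T = Q /\ forall u : 'cV[R]_n, u != 0 -> 0 < dotv (Q *m u) u.

Definition self_concordant (R : realType) (p : nat) (f : 'cV[R]_p -> \bar R) : Prop :=
  proper_fun f /\ lsc_fun f /\ convex_fun f /\
  (forall x, (f x < +oo)%E ->
     exists2 r : R, 0 < r & forall h, vnorm h < r -> f (x + h) \is a fin_num) /\
  forall x u, (f x < +oo)%E ->
    exists2 r : R, 0 < r & exists g1 g2 g3 : R -> R,
      (forall t : R, `|t| < r ->
         is_derive t 1 (fun s : R => fine (f (x + s *: u))) (g1 t) /\
         is_derive t 1 g1 (g2 t) /\ is_derive t 1 g2 (g3 t) /\
         {for t, continuous g3}) /\
      `| g3 0 | <= 2 * powR (g2 0) (3 / 2).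

(** The inexact step lands exactly on the subgradient: writing
    [e = H z - h + s] with [s] in [∂ψ(τ z)], the definition of [y^{k+1}]
    telescopes to [y^{k+1} = s].  By the Fenchel-Young equality, [τ z] is then
    a subgradient of [ψ^*] at [s], and the optimality residual of [P_k] at [s]
    is [∇²φ(y^k) e].  Since [P_k] is a quadratic with Hessian [∇²φ(y^k)] plus a
    convex function, [P_k(y) - P_k(s) >= <∇²φ(y^k) e, y - s> + ½||y - s||²_{y^k}
    >= -½||e||²_{y^k} >= -δ²/2] for every [y], in particular for [ȳ^{k+1}]. *)
From HB Require Import structures.
From mathcomp Require Import all_boot all_order all_algebra.
From mathcomp Require Import all_classical all_reals all_analysis.
From mathcomp Require Import lra.
Import Order.TTheory GRing.Theory Num.Theory numFieldNormedType.Exports.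
Local Open Scope ring_scope.
Local Open Scope classical_set_scope.

Set Implicit Arguments.
Unset Strict Implicit.
Unset Printing Implicit Defensive.

Section InnerProduct.
Variables (R : realType) (n : nat).
Implicit Types (u v w : 'cV[R]_n) (A Q : 'M[R]_n).

Lemma dotvDl u v w : dotv (u + v) w = dotv u w + dotv v w.
Proof. by rewrite /dotv linearD /= mulmxDl mxE. Qed.

Lemma dotvZl (a : R) u w : dotv (a *: u) w = a * dotv u w.
Proof. by rewrite /dotv linearZ /= -scalemxAl mxE. Qed.

Lemma dotvNl u w : dotv (- u) w = - dotv u w.
Proof. by rewrite -scaleN1r dotvZl mulN1r. Qed.

Lemma dotvBl u v w : dotv (u - v) w = dotv u w - dotv v w.
Proof. by rewrite dotvDl dotvNl. Qed.

Lemma dotvC u v : dotv u v = dotv v u.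
Proof. by rewrite /dotv -[v^T *m u]trmxK trmx_mul trmxK [RHS]mxE. Qed.

Lemma dotvDr u v w : dotv w (u + v) = dotv w u + dotv w v.
Proof. by rewrite dotvC dotvDl !(dotvC w). Qed.

Lemma dotvBr u v w : dotv w (u - v) = dotv w u - dotv w v.
Proof. by rewrite dotvC dotvBl !(dotvC w). Qed.

Lemma dotv0l w : dotv 0 w = 0.
Proof. by rewrite /dotv trmx0 mul0mx mxE. Qed.

Lemma dotv_mulmxl A u v : dotv (A *m u) v = dotv u (A^T *m v).
Proof. by rewrite /dotv trmx_mul mulmxA. Qed.

Lemma dotv_sym_mulmx A u v : A^T = A -> dotv (A *m u) v = dotv (A *m v) u.
Proof. by move=> AT; rewrite dotv_mulmxl AT dotvC. Qed.

Lemma posdef_unitmx Q : posdef Q -> Q \in unitmx.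
Proof.
case=> QT Qpos; rewrite unitmxE unitfE; apply/negP => /det0P[v v0 vQ].
have vT0 : v^T != 0 by apply: contra v0 => /eqP vT0; rewrite -(trmxK v) vT0 trmx0.
have QvT : Q *m v^T = 0 by rewrite -QT -trmx_mul vQ trmx0.
by have := Qpos _ vT0; rewrite QvT dotv0l ltxx.
Qed.

Lemma posdef_dotv_ge0 Q u : posdef Q -> 0 <= dotv (Q *m u) u.
Proof.
case=> _ Qpos; have [->|/Qpos/ltW //] := eqVneq u 0.
by rewrite mulmx0 dotv0l.
Qed.

Lemma locnorm_sqr Q u : posdef Q -> locnorm Q u ^+ 2 = dotv (Q *m u) u.
Proof. by move=> Qpd; rewrite sqr_sqrtr ?posdef_dotv_ge0. Qed.

(* Completing the square: [0 <= ||w + e||²_Q]. *)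
Lemma posdef_dotv_lin_quad_ge Q e w : posdef Q ->
  - (dotv (Q *m e) e / 2) <= dotv (Q *m e) w + dotv (Q *m w) w / 2.
Proof.
move=> Qpd; have := posdef_dotv_ge0 (w + e) Qpd.
rewrite mulmxDr !dotvDl !dotvDr (dotv_sym_mulmx e w) //; last by case: Qpd.
lra.
Qed.

Definition quad_model a Q c v := dotv a (v - c) + 2^-1 * dotv (Q *m (v - c)) (v - c).

Lemma quad_model_expansion a Q c x y : Q^T = Q ->
  quad_model a Q c y = quad_model a Q c x + dotv (a + Q *m (x - c)) (y - x)
                       + 2^-1 * dotv (Q *m (y - x)) (y - x).
Proof.
move=> QT; rewrite /quad_model.
have -> : y - c = (x - c) + (y - x) by rewrite [RHS]addrC addrA subrK.
move: (x - c) (y - x) => u d.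
rewrite mulmxDr !dotvDl !dotvDr (dotv_sym_mulmx d u QT).
lra.
Qed.

End InnerProduct.

Section FenchelYoung.
Variables (R : realType) (n : nat) (f : 'cV[R]_n -> \bar R).
Local Open Scope ereal_scope.

Lemma fconj_ge x s : (dotv s x)%:E - f x <= fconj f s.
Proof. by apply: ereal_sup_ubound; exists x. Qed.

Lemma fconj_subdiff x s : subdiff f x s -> fconj f s = (dotv s x)%:E - f x.
Proof.
move=> [fx_fin fx_sub]; apply/eqP; rewrite eq_le fconj_ge andbT.
apply: ge_ereal_sup => _ [w _ <-]; move: (fx_sub w).
rewrite -(fineK fx_fin) -EFinD; case: (f w) => [r | | ] /=.
- by rewrite -!EFinD !lee_fin dotvBr; lra.
- by rewrite addeNy leNye.
- by rewrite leeNy_eq.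
Qed.

Lemma subdiff_fconj x s : subdiff f x s -> subdiff (fconj f) s x.
Proof.
move=> fxs; have [fx_fin _] := fxs.
rewrite /subdiff /= (fconj_subdiff fxs) -(fineK fx_fin) /= -EFinD.
split => // y; apply: le_trans (fconj_ge x y).
by rewrite -(fineK fx_fin) /= -!EFinD lee_fin dotvBr !(dotvC x); lra.
Qed.

End FenchelYoung.

Lemma subdiff_model_gap (R : realType) (n : nat) (q : 'cV[R]_n -> R)
    (F : 'cV[R]_n -> \bar R) (t K : R) (s w : 'cV[R]_n) :
  0 < t -> subdiff F s w ->
  (forall y, q s <= q y + t * dotv w (y - s) + K) ->
  forall y, ((q s)%:E + t%:E * F s - ((q y)%:E + t%:E * F y) <= K%:E)%E.
Proof.
move=> t_gt0 [Fs_fin Fs_sub] qlb y; have := Fs_sub y.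
rewrite -(fineK Fs_fin); case: (F y) => [b | | ] /=.
- rewrite -EFinD !lee_fin => Fb.
  have : t * fine (F s) + t * dotv w (y - s) <= t * b by rewrite -mulrDr ler_pM2l.
  by have := qlb y; lra.
- by rewrite gt0_muley ?lte_fin // addey // leNye.
- by rewrite leeNy_eq.
Qed.

Theorem lemma6p1 (R : realType) (n p : nat)
  (f : 'cV[R]_p -> \bar R) (psi : 'cV[R]_n -> \bar R) (D : 'M[R]_(n, p))
  (yk y0 xi0 g ybar z e : 'cV[R]_n) (Q : 'M[R]_n) (tau delta : R) :
  self_concordant f ->
  proper_fun psi -> lsc_fun psi -> convex_fun psi ->
  (n <= p)%N -> \rank D = n ->
  let phi := fun y : 'cV[R]_n => fconj f (- (D^T *m y)) in
  (phi yk < +oo)%E ->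
  grad_at phi yk g -> hess_at phi yk Q ->
  (exists M : 'M[R]_p, hess_at (fconj f) (- (D^T *m yk)) M /\ Q = D *m M *m D^T) ->
  posdef Q ->
  subdiff (fconj psi) y0 xi0 ->
  0 < tau <= 1 ->
  let gt := g - (tau^-1 - 1) *: xi0 in
  let P := fun y : 'cV[R]_n =>
    ((dotv gt (y - yk) + 2^-1 * dotv (Q *m (y - yk)) (y - yk))%:E
     + (tau^-1)%:E * fconj psi y)%E in
  (forall y, (P ybar <= P y)%E) ->
  let H := invmx Q in
  let h := yk - invmx Q *m gt in
  0 <= delta ->
  locnorm Q e <= delta ->
  (exists s, subdiff psi (tau *: z) s /\ e = H *m z - h + s) ->
  let y1 := yk - invmx Q *m (gt + z) + e in
  (P y1 - P ybar <= (delta ^+ 2 / 2)%:E)%E.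
Proof.
move=> _ _ _ _ _ _ phi _ _ _ _ Qpd _ /andP[tau_gt0 _] gt P _ H h delta_ge0 e_le
  [s [psi_s eE]]; clearbody gt.
have QT : Q^T = Q by case: Qpd.
have y1E : yk - invmx Q *m (gt + z) + e = s.
  rewrite eE /H /h mulmxDr; move: (invmx Q *m gt) (invmx Q *m z) => a b.
  by rewrite opprD opprB !addrA subrK subrK subrr add0r.
have residual : gt + Q *m (s - yk) = Q *m e - z.
  have -> : s - yk = e - invmx Q *m (gt + z).
    by rewrite -y1E [LHS]addrC !addrA addNr add0r addrC.
  by rewrite mulmxBr mulmxA mulmxV ?posdef_unitmx // mul1mx addrCA opprD addNKr.
have ee_le : dotv (Q *m e) e <= delta ^+ 2.
  by rewrite -locnorm_sqr // lerXn2r // nnegrE sqrtr_ge0.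
cbv zeta; rewrite y1E.
apply: (subdiff_model_gap (q := quad_model gt Q yk) _ (subdiff_fconj psi_s)) => [|y].
  by rewrite invr_gt0.
rewrite (quad_model_expansion gt yk s y QT) dotvZl mulrA mulVf ?gt_eqF // mul1r.
rewrite residual dotvBl; have := posdef_dotv_lin_quad_ge e (y - s) Qpd.
lra.
Qed.
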